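(* Let $f,g:\mathbb{N}\to\mathbb{N}$ be functions with $n=o(f(n))$ and $g(n)=o(n^{2})$ as $n\to\infty$, and let $l:\mathbb{N}\to\mathbb{N}$ satisfy $f(n)\le l(n)\le g(n)$ for every $n\in\mathbb{N}$. Then $$r(l(n))\sim \frac{l(n)^{2}}{2\alpha_n}\qquad (n\to\infty).$$
   Context: For $n\in\mathbb{N}$ let $G_n=G(n,3,1)$ be the graph whose vertex set $V_n$ consists of all $3$-element subsets of $\{1,\dots,n\}$ (equivalently, $(0,1)$-vectors in $\mathbb{R}^n$ with exactly three ones), two vertices being adjacent if and only if the corresponding sets share exactly one element (equivalently, the vectors have scalar product $1$). Let $\alpha_n$ denote the independence number of $G(n,3,1)$. For $W\subseteq V_n$ let $r(W)$ be the number of edges of $G(n,3,1)$ with both endpoints in $W$, and for an integer $0\le l\le \binom{n}{3}$ let $r(l)=\min\{r(W): W\subseteq V_n,\ |W|=l\}$ (so $r(l(n))$ is computed in $G(n,3,1)$). *)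

From HB Require Import structures.
From mathcomp Require Import all_boot all_order all_algebra.
Set Implicit Arguments. Unset Strict Implicit. Unset Printing Implicit Defensive.
Import Order.TTheory GRing.Theory Num.Theory.

(* Vertex set V_n of G(n,3,1): 3-element subsets of {1..n} (modelled as 'I_n). *)
Definition Vn (n : nat) : {set {set 'I_n}} := [set A : {set 'I_n} | #|A| == 3].

Definition adj31 (n : nat) (A B : {set 'I_n}) : bool := #|A :&: B| == 1.

Definition indep31 (n : nat) (S : {set {set 'I_n}}) : bool :=
  (S \subset Vn n) && [forall A in S, forall B in S, ~~ adj31 A B].

Definition alpha31 (n : nat) : nat :=
  \max_(S : {set {set 'I_n}} | indep31 S) #|S|.

Definition rW (n : nat) (W : {set {set 'I_n}}) : nat :=
  #|[set e : {set {set 'I_n}} |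
      (e \subset W) &&
      [exists A : {set 'I_n}, exists B : {set 'I_n},
         (A \in Vn n) && (B \in Vn n) && (e == [set A; B]) && adj31 A B]]|.

(* r(l) = min { r(W) : W subset of V_n, |W| = l }.  The default value
   #|Vn n|^2 is an upper bound for every r(W), so it is a neutral element
   whenever some W of size l exists (i.e. l <= C(n,3)). *)
Definition rl (n l : nat) : nat :=
  \big[minn/ (#|Vn n| ^ 2)%N]_(W : {set {set 'I_n}} | (W \subset Vn n) && (#|W| == l)) rW W.

From HB Require Import structures.
From mathcomp Require Import all_boot all_order all_algebra.
From mathcomp Require Import zify lra.
Import Order.TTheory GRing.Theory Num.Theory.
Set Implicit Arguments. Unset Strict Implicit. Unset Printing Implicit Defensive.

(* Lower bound: if W has no independent set larger than a, removing closed
   neighbourhoods of minimum degree one at a time (Turan) gives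
   |W|^2 <= a (2 r(W) + |W|).  Independent sets of G(n,3,1) are families of
   3-sets with pairwise even intersections, so alpha_n <= n by the oddtown
   argument over F_2, and alpha_n |W| = o(|W|^2) since n = o(l(n)).
   Upper bound: the triples {k, c + 2j, c + 2j + 1} with block index k < c and
   j < s pairwise meet exactly in k inside a block and in 0 or 2 points across
   blocks, so l of them span at most l s / 2 edges.  Taking c = n - n/K blocks,
   s is about l/n, and l(n) = o(n^2) leaves room for the 2s extra points; hence
   r(l) <= (1 + eps) l^2 / (2 n) <= (1 + eps) l^2 / (2 alpha_n). *)

Lemma eq_set2_pair (T : finType) (a b x y : T) : a != b ->
  ([set x; y] == [set a; b]) = ((x, y) \in [set (a, b); (b, a)]).
Proof.
move=> ab; apply/eqP/set2P => [E | [] [-> ->] //]; last exact: setUC.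
have xy : x != y.
  by have := congr1 (fun A : {set T} => #|A|) E; rewrite /= !cards2 ab; case: (x != y).
have : x \in [set a; b] by rewrite -E set21.
have : y \in [set a; b] by rewrite -E set22.
move=> /set2P[] ? /set2P[] ?; subst; by [left | right | rewrite eqxx in xy].
Qed.

(* With t^2 <= (a - 1)(O + t), Cauchy-Schwarz gives
   (t + D)^2 <= a (t^2 / (a - 1) + D^2) <= a (O + t + D^2). *)
Lemma turan_arith (a t D O : nat) : 0 < a -> t ^ 2 <= a.-1 * (O + t) ->
  (t + D) ^ 2 <= a * (O + t + D ^ 2).
Proof.
case: a => // -[|b] _ /= h.
  have t0 : t = 0 by move: h; rewrite mul0n leqn0 expn_eq0 => /andP [/eqP].
  by rewrite t0 add0n mul1n leq_addl.
have amgm : 2 * t * (b.+1 * D) <= t ^ 2 + (b.+1 * D) ^ 2.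
  by have := (nat_AGM2 t (b.+1 * D)).1; rewrite sqrnD; lia.
have key : b.+1 * (t + D) ^ 2 <= b.+2 * t ^ 2 + b.+1 * b.+2 * D ^ 2.
  rewrite sqrnD expnMn in amgm *; nia.
have ht : b.+2 * t ^ 2 <= b.+2 * (b.+1 * (O + t)) by rewrite leq_mul2l h orbT.
rewrite -(leq_pmul2l (ltn0Sn b)); nia.
Qed.

Section SimpleGraph.
Variables (T : finType) (e : rel T).
Hypothesis e_sym : symmetric e.

Definition arcs (W : {set T}) : {set T * T} :=
  [set p | (p.1 \in W) && (p.2 \in W) && e p.1 p.2].
Definition deg (W : {set T}) (u : T) : nat := #|[set w in W | e u w]|.
Definition edges (W : {set T}) : {set {set T}} := [set [set p.1; p.2] | p in arcs W].
Definition stable (S : {set T}) : bool := [forall u in S, forall w in S, ~~ e u w].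

Lemma card_arcs (W : {set T}) : #|arcs W| = \sum_(u in W) deg W u.
Proof.
rewrite -sum1_card /deg; under [RHS]eq_bigr do rewrite -sum1_card.
rewrite pair_big_dep /=; apply: eq_bigl => -[u w]; rewrite !inE /=.
by case: (u \in W); case: (w \in W).
Qed.

Lemma card_arcs_edges (W : {set T}) :
  {in W, irreflexive e} -> #|arcs W| = 2 * #|edges W|.
Proof.
move=> e_irr; rewrite -sum1_card (partition_big_imset (fun p => [set p.1; p.2])).
rewrite mulnC -sum_nat_const; apply: eq_bigr => _ /imsetP [[a b] abW ->].
move: abW; rewrite inE /= => /andP [/andP [aW bW] eab].
have ab : a != b by apply: contraTneq eab => ->; rewrite e_irr.
rewrite sum1_card (@eq_card _ _ [set (a, b); (b, a)]).
  by rewrite cards2 xpair_eqE (negPf ab).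
move=> -[x y]; rewrite unfold_in /= inE /= eq_set2_pair //.
apply: andb_idl; rewrite !inE !xpair_eqE => /orP [] /andP [/eqP -> /eqP ->];
  by rewrite ?aW ?bW ?eab // e_sym.
Qed.

Definition cnbhd (W : {set T}) (v : T) : {set T} := v |: [set w in W | e v w].

Lemma card_cnbhd (W : {set T}) v : ~~ e v v -> #|cnbhd W v| = (deg W v).+1.
Proof. by move=> evv; rewrite cardsU1 inE (negPf evv) andbF. Qed.

Lemma cnbhd_sub (W : {set T}) v : v \in W -> cnbhd W v \subset W.
Proof. by move=> vW; apply/subsetP => w; rewrite !inE => /predU1P [-> | /andP []]. Qed.

Lemma stable_setU1_cnbhd (W S : {set T}) v :
  ~~ e v v -> S \subset W :\: cnbhd W v -> stable S -> stable (v |: S).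
Proof.
move=> evv SW stS; have ev w : w \in S -> ~~ e v w.
  by move/(subsetP SW); rewrite !inE negb_or => /andP [/andP [_ ]]; case: (w \in W).
apply/forall_inP => x xS; apply/forall_inP => y yS.
move: xS yS; rewrite !in_setU1 => /predU1P [-> | xS] /predU1P [-> | yS] //.
- exact: ev.
- by rewrite e_sym ev.
- by move/forall_inP: stS => /(_ x xS) /forall_inP /(_ y yS).
Qed.

Lemma card_arcs_setD_cnbhd (W : {set T}) v : v \in W -> ~~ e v v ->
  (forall u, u \in W -> deg W v <= deg W u) ->
  deg W v * (deg W v).+1 + #|arcs (W :\: cnbhd W v)| <= #|arcs W|.
Proof.
move=> vW evv vmin; rewrite !card_arcs [X in _ <= X](big_setID (cnbhd W v)) /=.
rewrite (setIidPr (cnbhd_sub vW)); apply: leq_add.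
  rewrite mulnC -(card_cnbhd W evv) -sum_nat_const; apply: leq_sum => u uN.
  exact/vmin/(subsetP (cnbhd_sub vW)).
apply: leq_sum => u _; apply: subset_leq_card; apply/subsetP => x.
by rewrite !inE => /andP [/andP [_ ->] ->].
Qed.

Lemma turan_bound (W : {set T}) (a : nat) : {in W, irreflexive e} ->
  (forall S : {set T}, S \subset W -> stable S -> #|S| <= a) ->
  #|W| ^ 2 <= a * (#|arcs W| + #|W|).
Proof.
have [m] := ubnP #|W|; elim: m W a => // m IH W a ltWm e_irr a_ub.
have [-> | [v0 v0W]] := set_0Vmem W; first by rewrite cards0.
have [v vW vmin] := arg_minnP (deg W) v0W.
have evv : ~~ e v v by rewrite e_irr.
set d := deg W v; set W' := W :\: cnbhd W v.
have cardW : #|W| = #|W'| + d.+1.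
  rewrite cardsD (setIidPr (cnbhd_sub vW)) -(card_cnbhd W evv) subnK //.
  exact/subset_leq_card/cnbhd_sub.
have a_gt0 : 0 < a.
  apply: leq_trans (a_ub [set v] _ _); rewrite ?cards1 ?sub1set //.
  by apply/forall_inP => x /set1P ->; apply/forall_inP => y /set1P ->.
have a'_ub (S : {set T}) : S \subset W' -> stable S -> #|S| <= a.-1.
  move=> SW' stS; have vS : v \notin S.
    by apply/negP => /(subsetP SW'); rewrite !inE eqxx.
  have vSW : v |: S \subset W.
    by rewrite subUset sub1set (subset_trans SW' (subsetDl _ _)) andbT.
  by have := a_ub _ vSW (stable_setU1_cnbhd evv SW' stS); rewrite cardsU1 vS; lia.
have e_irr' : {in W', irreflexive e} by move=> u /setDP [/e_irr].
have ltW'm : #|W'| < m by lia.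
have IHW' := IH W' a.-1 ltW'm e_irr' a'_ub.
rewrite cardW; apply: leq_trans (turan_arith d.+1 a_gt0 IHW') _; rewrite leq_mul2l.
by have := card_arcs_setD_cnbhd vW evv vmin; rewrite -/d -/W'; lia.
Qed.
End SimpleGraph.

Lemma oddtown n (S : {set {set 'I_n}}) :
  {in S, forall A : {set 'I_n}, odd #|A|} ->
  {in S &, forall A B : {set 'I_n}, A != B -> ~~ odd #|A :&: B|} ->
  #|S| <= n.
Proof.
move=> oddS evenS.
pose M : 'M['F_2]_(#|S|, n) := (\matrix_(i, j) ((j \in enum_val (A := S) i) : nat)%:R)%R.
have MMT : (M *m M^T = 1%:M)%R.
  apply/matrixP => i k; rewrite !mxE.
  under eq_bigr do rewrite !mxE -natrM mulnb -in_setI.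
  rewrite -natr_sum (_ : \sum_j _ = #|enum_val i :&: enum_val k|); last first.
    by rewrite -sum1_card [RHS]big_mkcond; apply: eq_bigr => j _; case: (_ \in _).
  rewrite -(Fp_nat_mod (isT : prime 2)) modn2.
  have [<- | ik] := eqVneq i k; first by rewrite setIid oddS // enum_valP.
  rewrite (negPf (evenS _ _ (enum_valP i) (enum_valP k) _)) //.
  by apply: contra ik => /eqP /enum_val_inj ->.
have := mxrankM_maxl M M^T; rewrite MMT mxrank1 => /leq_trans; apply.
exact: rank_leq_col.
Qed.

Lemma adj31_sym n : symmetric (@adj31 n).
Proof. by move=> A B; rewrite /adj31 setIC. Qed.

Lemma adj31_irr n : {in Vn n, irreflexive (@adj31 n)}.
Proof. by move=> A; rewrite /adj31 inE setIid => /eqP ->. Qed.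

Lemma adj31_irr_sub n (W : {set {set 'I_n}}) :
  W \subset Vn n -> {in W, irreflexive (@adj31 n)}.
Proof. by move=> WV A AW; apply: adj31_irr (subsetP WV A AW). Qed.

Lemma card_setI_Vn n (A B : {set 'I_n}) : A \in Vn n -> B \in Vn n -> A != B ->
  #|A :&: B| < 3.
Proof.
rewrite !inE => /eqP A3 /eqP B3; apply: contraNT; rewrite -leqNgt => le3.
have eqA : A :&: B == A by rewrite eqEcard subsetIl A3.
have eqB : A :&: B == B by rewrite eqEcard subsetIr B3.
by rewrite -(eqP eqA) -[X in _ == X](eqP eqB).
Qed.

Lemma alpha31_le n : alpha31 n <= n.
Proof.
apply/bigmax_leqP => S /andP [SV /forall_inP indS]; apply: oddtown.
  by move=> A /(subsetP SV); rewrite inE => /eqP ->.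
move=> A B AS BS AB; have := card_setI_Vn (subsetP SV A AS) (subsetP SV B BS) AB.
by move/forall_inP: (indS A AS) => /(_ B BS); rewrite /adj31; case: #|_| => [|[|[]]].
Qed.

Lemma alpha31_ge n (S : {set {set 'I_n}}) :
  S \subset Vn n -> stable (@adj31 n) S -> #|S| <= alpha31 n.
Proof.
move=> SV stS; apply: (@leq_bigmax_cond _ (@indep31 n) (fun S => #|S|)).
by rewrite /indep31 SV.
Qed.

Lemma alpha31_gt0_of_vertex n (A : {set 'I_n}) : A \in Vn n -> 0 < alpha31 n.
Proof.
move=> AV; have stA : stable (@adj31 n) [set A].
  by apply/forall_inP => x /set1P ->; apply/forall_inP => y /set1P ->; rewrite adj31_irr.
by apply: leq_trans (alpha31_ge _ stA); rewrite ?cards1 ?sub1set.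
Qed.

Lemma rW_edges n (W : {set {set 'I_n}}) :
  W \subset Vn n -> rW W = #|edges (@adj31 n) W|.
Proof.
move=> WV; apply: eq_card => E; rewrite inE; apply/andP/imsetP.
  case=> EW /existsP [A /existsP [B /andP [/andP [_ /eqP defE] AB]]].
  exists (A, B) => //; rewrite inE /= AB andbT.
  by apply/andP; split; apply: (subsetP EW); rewrite defE ?set21 ?set22.
case=> -[A B]; rewrite inE /= => /andP [/andP [AW BW] AB] ->; split.
  by apply/subsetP => x /set2P [] ->.
apply/existsP; exists A; apply/existsP; exists B.
by rewrite (subsetP WV A AW) (subsetP WV B BW) eqxx AB.
Qed.

Lemma card_arcs_rW n (W : {set {set 'I_n}}) : W \subset Vn n ->
  #|arcs (@adj31 n) W| = 2 * rW W.
Proof.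
move=> WV; rewrite rW_edges // card_arcs_edges //.
  exact: adj31_sym.
exact: adj31_irr_sub.
Qed.

Lemma rW_lower n (W : {set {set 'I_n}}) : W \subset Vn n ->
  #|W| ^ 2 <= alpha31 n * (2 * rW W + #|W|).
Proof.
move=> WV; rewrite -card_arcs_rW //.
apply: turan_bound; [exact: adj31_sym | exact: adj31_irr_sub |].
by move=> S SW; apply: alpha31_ge; apply: subset_trans SW WV.
Qed.

Lemma rl_le_rW n (W : {set {set 'I_n}}) : W \subset Vn n -> rl n #|W| <= rW W.
Proof. by move=> WV; apply: (bigmin_le_cond (T := nat)); rewrite WV eqxx. Qed.

Lemma rl_lower n (W : {set {set 'I_n}}) : W \subset Vn n ->
  #|W| ^ 2 <= alpha31 n * (2 * rl n #|W| + #|W|).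
Proof.
move=> WV; have [-> | [A AW]] := set_0Vmem W; first by rewrite cards0.
have a_gt0 := alpha31_gt0_of_vertex (subsetP WV A AW).
apply: (big_ind (fun r => #|W| ^ 2 <= alpha31 n * (2 * r + #|W|))).
- apply: leq_trans (leq_pmull _ a_gt0) _; rewrite leq_mul2l; apply/orP; right.
  by have := subset_leq_card WV; rewrite -(leq_exp2r _ _ (ltn0Sn 1)); lia.
- by move=> x y hx hy; rewrite /minn; case: ltnP.
- by move=> V /andP [VV /eqP <-]; apply: rW_lower.
Qed.

Section BlockFamily.
Variables (n c s L : nat).
Hypotheses (s_gt0 : 0 < s) (L_le : L <= c * s) (cs_le : c + 2 * s <= n.+1).

Definition block_triple (i : nat) : {set 'I_n.+1} :=
  [set inord (i %/ s); inord (c + 2 * (i %% s)); inord (c + 2 * (i %% s) + 1)].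

Lemma block_triple_bounds (i : nat) : i < L ->
  [/\ i %/ s < c, c + 2 * (i %% s) + 1 < n.+1 & i %% s < s].
Proof.
move=> iL; have ms := ltn_pmod i s_gt0.
split => //; last by lia.
by rewrite ltn_divLR //; apply: leq_trans iL L_le.
Qed.

Lemma mem_block_triple (i : nat) (y : 'I_n.+1) : i < L -> (y \in block_triple i) =
  [|| val y == i %/ s, val y == c + 2 * (i %% s) | val y == c + 2 * (i %% s) + 1].
Proof.
move=> /block_triple_bounds [h1 h2 h3].
by rewrite !inE -!(inj_eq val_inj) /= !inordK //; lia.
Qed.

Lemma card_block_triple (i : nat) : i < L -> #|block_triple i| = 3.
Proof.
move=> iL; have [h1 h2 h3] := block_triple_bounds iL.
by rewrite /block_triple setUC cardsU1 cards2 !inE -!(inj_eq val_inj) /= !inordK //; lia.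
Qed.

Lemma block_triple_inj (i j : nat) : i < L -> j < L ->
  block_triple i = block_triple j -> i = j.
Proof.
move=> iL jL E; have [a1 a2 a3] := block_triple_bounds iL.
have [b1 b2 b3] := block_triple_bounds jL.
have m1 : (inord (i %/ s) : 'I_n.+1) \in block_triple j by rewrite -E !inE eqxx.
have m2 : (inord (c + 2 * (i %% s)) : 'I_n.+1) \in block_triple j.
  by rewrite -E !inE eqxx orbT.
by move: m1 m2; rewrite !mem_block_triple // /= !inordK; lia.
Qed.

(* Triples of different blocks meet in the empty set or in a pair {c + 2k, c + 2k + 1}. *)
Lemma adj_block_triple (i j : nat) : i < L -> j < L ->
  adj31 (block_triple i) (block_triple j) -> i %/ s = j %/ s.
Proof.
move=> iL jL /cards1P [k E]; apply/eqP/negPn/negP => ne.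
have [a1 a2 a3] := block_triple_bounds iL; have [b1 b2 b3] := block_triple_bounds jL.
have : k \in block_triple i :&: block_triple j by rewrite E set11.
rewrite inE !mem_block_triple // => /andP [K1 K2].
have p1 : (inord (c + 2 * (i %% s)) : 'I_n.+1) \in [set k].
  by rewrite -E inE !mem_block_triple // /= !inordK; lia.
have p2 : (inord (c + 2 * (i %% s) + 1) : 'I_n.+1) \in [set k].
  by rewrite -E inE !mem_block_triple // /= !inordK; lia.
move: p1 p2; rewrite !inE => /eqP /(congr1 val) p1 /eqP /(congr1 val) p2.
by move: p1 p2; rewrite /= !inordK; lia.
Qed.

Lemma block_family : exists W : {set {set 'I_n.+1}},
  [/\ W \subset Vn n.+1, #|W| = L & #|arcs (@adj31 n.+1) W| <= L * s].
Proof.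
pose W := [set block_triple i | i : 'I_L].
exists W; split.
- by apply/subsetP => _ /imsetP [i _ ->]; rewrite inE card_block_triple.
- rewrite card_in_imset ?card_ord // => i j _ _ /block_triple_inj ij.
  exact/val_inj/ij.
pose Ip := [set q : 'I_L * 'I_L | q.1 %/ s == q.2 %/ s].
have arcsW : arcs (@adj31 n.+1) W \subset
    [set (block_triple q.1, block_triple q.2) | q : 'I_L * 'I_L in Ip].
  apply/subsetP => -[A B]; rewrite inE /= => /andP [/andP [/imsetP [i _ ->]]].
  move=> /imsetP [j _ ->] ij; apply/imsetP; exists (i, j) => //.
  by rewrite inE; apply/eqP/adj_block_triple.
apply: (leq_trans (subset_leq_card arcsW)); apply: (leq_trans (leq_imset_card _ _)).
pose g (q : 'I_L * 'I_L) : 'I_L * 'I_s := (q.1, Ordinal (ltn_pmod q.2 s_gt0)).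
rewrite -(card_in_imset (f := g)).
  by rewrite -[X in _ <= X * _]card_ord -[X in _ <= _ * X]card_ord -card_prod max_card.
move=> [i j] [i' j']; rewrite !inE /= => /eqP h /eqP h' [e1 e2]; subst i'.
by congr (_, _); apply: val_inj; rewrite /= (divn_eq j s) (divn_eq j' s) e2 -h -h'.
Qed.
End BlockFamily.

Lemma block_parameters n K L : 1 < K -> 10 * K <= n -> 8 * K * L <= n ^ 2 ->
  exists c s, [/\ 0 < s, L <= c * s, c + 2 * s <= n & s * n * K <= (L + n) * K + s * n].
Proof.
move=> K_gt1 nK nL; have K_gt0 : 0 < K by lia.
set t := n %/ K; set c := n - t; set s := L %/ c + 1.
have tK : t * K <= n by apply: leq_divM.
have Kt : n < t.+1 * K by apply: ltn_ceil.
have tn : 2 * t <= n by apply: leq_trans tK; rewrite mulnC leq_mul2l K_gt1 orbT.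
have c_gt0 : 0 < c by rewrite /c; lia.
have Lcs : L <= c * s.
  by rewrite /s mulnDr muln1 {1}(divn_eq L c) mulnC leq_add2l ltnW // ltn_pmod.
have csL : c * s <= L + c by rewrite /s mulnDr muln1 leq_add2r mulnC leq_divM.
have ns : n * s <= 2 * L + 2 * n.
  have : n * s <= 2 * (c * s) by rewrite mulnA leq_mul2r; lia.
  lia.
have sK : 4 * s * K <= n + 8 * K.
  have : n * (4 * s * K) <= n * (n + 8 * K).
    have -> : n * (4 * s * K) = 4 * K * (n * s) by lia.
    apply: leq_trans (leq_mul (leqnn _) ns) _; lia.
  by rewrite leq_pmul2l //; lia.
have st : 2 * s <= t by rewrite -ltnS -(ltn_pmul2r K_gt0); lia.
have nKc : n * K <= c * K + n by rewrite /c mulnBl; lia.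
exists c, s; split; [by rewrite /s addn1 | by [] | by rewrite /c; lia | ].
have : s * (n * K) <= s * (c * K + n) by rewrite leq_mul2l nKc orbT.
have : c * s * K <= (L + c) * K by rewrite leq_mul2r csL orbT.
have : (L + c) * K <= (L + n) * K by rewrite leq_mul2r leq_add2l leq_subr orbT.
lia.
Qed.

Lemma exists_block_family n c s L : 0 < s -> L <= c * s -> c + 2 * s <= n ->
  exists W : {set {set 'I_n}},
    [/\ W \subset Vn n, #|W| = L & #|arcs (@adj31 n) W| <= L * s].
Proof.
case: n => [|n] s_gt0 Lcs csn; first by exfalso; lia.
exact: block_family s_gt0 Lcs csn.
Qed.

Lemma alpha31_gt0 n : 2 < n -> 0 < alpha31 n.
Proof.
move=> n_gt2; have [W [WV W1 _]] := @exists_block_family n 1 1 1 isT isT n_gt2.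
have [A AW] : exists A, A \in W by apply/set0Pn; rewrite -card_gt0 W1.
exact: alpha31_gt0_of_vertex (subsetP WV A AW).
Qed.

Lemma rl_block_bounds n c s L : 0 < s -> L <= c * s -> c + 2 * s <= n ->
  L ^ 2 <= alpha31 n * (2 * rl n L + L) /\ 2 * rl n L <= L * s.
Proof.
move=> s_gt0 Lcs csn; have [W [WV <- arcsW]] := exists_block_family s_gt0 Lcs csn.
split; first exact: rl_lower.
by apply: leq_trans arcsW; rewrite card_arcs_rW // leq_mul2l rl_le_rW.
Qed.

Local Open Scope ring_scope.

Lemma leq_mul_of_ler_invM (R : numFieldType) (a b c : nat) : (0 < a)%N ->
  (b%:R <= a%:R^-1 * c%:R :> R) -> (a * b <= c)%N.
Proof. by move=> a_gt0; rewrite ler_pdivlMl ?ltr0n // -natrM ler_nat. Qed.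
Lemma exists_nat_scale (R : archiRealFieldType) (eps : R) : 0 < eps ->
  exists2 K : nat, (1 < K)%N & 2 + 2 * eps <= eps * K%:R.
Proof.
move=> eps_gt0; pose x := 2 / eps + 2.
have x_ge0 : 0 <= x by rewrite /x addr_ge0 ?divr_ge0 ?ltW.
exists (Num.Def.archi_bound x).+2 => //.
have : x <= (Num.Def.archi_bound x).+2%:R.
  by apply/ltW/(lt_le_trans (archi_boundP x_ge0)); rewrite ler_nat; lia.
move/(ler_wpM2l (ltW eps_gt0)); apply: le_trans.
by rewrite /x mulrDr mulrCA divff ?gt_eqF // mulr1 mulrC.
Qed.

Lemma rel_error_of_sandwich (R : realFieldType) (r a l eps : R) :
  0 < a -> 0 <= l -> a <= eps * l ->
  l ^+ 2 <= a * (2 * r + l) -> 2 * r * a <= (1 + eps) * l ^+ 2 ->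
  `|r - l ^+ 2 / (2 * a)| <= eps * (l ^+ 2 / (2 * a)).
Proof.
move=> a_gt0 l_ge0 a_le lower upper.
have a2_gt0 : 0 < 2 * a by rewrite mulr_gt0.
set Q := l ^+ 2 / (2 * a); have QA : Q * (2 * a) = l ^+ 2 by rewrite divfK ?gt_eqF.
have epsQA : eps * Q * (2 * a) = eps * l ^+ 2 by rewrite -mulrA QA.
have al : a * l <= eps * l * l by rewrite ler_wpM2r.
rewrite ler_norml; apply/andP; split; rewrite -(ler_pM2r a2_gt0); nra.
Qed.

Lemma block_ratio (R : realFieldType) (s m l K eps : R) :
  1 < K -> 2 + 2 * eps <= eps * K -> 0 <= l -> m <= eps / 2 * l ->
  s * m * K <= (l + m) * K + s * m -> s * m <= (1 + eps) * l.
Proof.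
move=> K_gt1 epsK l_ge0 ml smK.
have : (K - 1) * (s * m) <= (K - 1) * ((1 + eps) * l).
  have : m * K <= eps / 2 * l * K by rewrite ler_wpM2r // ltW // (lt_trans ltr01).
  have : (2 + 2 * eps) * l <= eps * K * l by rewrite ler_wpM2r.
  nra.
by rewrite ler_pM2l // subr_gt0.
Qed.

Lemma rel_error_of_bounds (R : realFieldType) (r a l s m eps : R) :
  0 < a -> a <= m -> m <= eps / 2 * l -> 0 <= l -> 0 <= s -> 0 <= eps ->
  l ^+ 2 <= a * (2 * r + l) -> 2 * r <= l * s -> s * m <= (1 + eps) * l ->
  `|r - l ^+ 2 / (2 * a)| <= eps * (l ^+ 2 / (2 * a)).
Proof.
move=> a_gt0 am ml l_ge0 s_ge0 eps_ge0 lower rls sml.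
apply: rel_error_of_sandwich => //; first lra.
have h1 := ler_wpM2r (ltW a_gt0) rls.
have h2 := ler_wpM2l (mulr_ge0 l_ge0 s_ge0) am.
have h3 := ler_wpM2l l_ge0 sml.
lra.
Qed.

Theorem theorem1 (f g l : nat -> nat)
  (hf : forall eps : rat, 0 < eps -> exists N : nat, forall n : nat, (N <= n)%N ->
          (n%:R : rat) <= eps * (f n)%:R)
  (hg : forall eps : rat, 0 < eps -> exists N : nat, forall n : nat, (N <= n)%N ->
          ((g n)%:R : rat) <= eps * (n ^ 2)%:R)
  (hfl : forall n : nat, (f n <= l n)%N)
  (hlg : forall n : nat, (l n <= g n)%N) :
  forall eps : rat, 0 < eps -> exists N : nat, forall n : nat, (N <= n)%N ->
    `| ((rl n (l n))%:R : rat) - ((l n) ^ 2)%:R / (2 * (alpha31 n)%:R) |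
      <= eps * (((l n) ^ 2)%:R / (2 * (alpha31 n)%:R)).
Proof.
move=> eps eps_gt0; have [K K_gt1 epsK] := exists_nat_scale eps_gt0.
have [N1 hN1] := hf (eps / 2) ltac:(by rewrite divr_gt0).
have K8_gt0 : (0 < 8 * K)%N by lia.
have [N2 hN2] := hg (8 * K)%:R^-1 ltac:(by rewrite invr_gt0 ltr0n).
exists (N1 + N2 + 10 * K)%N => n n_ge; set L := l n.
have nL : n%:R <= eps / 2 * L%:R.
  apply: le_trans (hN1 n _) _; first lia.
  by rewrite ler_pM2l ?divr_gt0 // ler_nat hfl.
have KLn : (8 * K * L <= n ^ 2)%N.
  apply: leq_trans (leq_mul_of_ler_invM K8_gt0 (hN2 n _)); last lia.
  by rewrite leq_mul2l hlg orbT.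
have nK : (10 * K <= n)%N by lia.
have [c [s [s_gt0 Lcs csn snK]]] := block_parameters K_gt1 nK KLn.
have [lower upper] := rl_block_bounds s_gt0 Lcs csn.
rewrite natrX; apply: (rel_error_of_bounds _ _ nL (ler0n _ _) (ler0n _ s) (ltW eps_gt0)).
- by rewrite ltr0n alpha31_gt0 //; lia.
- by rewrite ler_nat alpha31_le.
- by move: lower; rewrite -(ler_nat rat) !(natrM, natrD, natrX).
- by move: upper; rewrite -(ler_nat rat) !natrM.
- apply: block_ratio epsK _ nL _; rewrite ?ler0n ?ltr1n //.
  by move: snK; rewrite -(ler_nat rat) !(natrM, natrD).
Qed.
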